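(* Let $q\ge2$, $n\ge1$ and $\boldsymbol{x}\neq\boldsymbol{y}\in\Sigma_q^n$. (1) $d_H(\mathcal{R}(\boldsymbol{x}),\mathcal{R}(\boldsymbol{y}))=3$ if and only if there exist $\boldsymbol{u},\boldsymbol{v}\in\Sigma_q^{\ge0}$, integers $t_1,t_2\ge1$ and symbols $a_1,b_1,a_2,b_2\in\Sigma_q$ with $a_1\ne b_1$, $a_2\ne b_2$, such that $\{\{\alpha_{t_1}(a_1b_1)[t_1],a_2\}\}\neq\{\{\alpha_{t_1}(b_1a_1)[t_1],b_2\}\}$ and $\boldsymbol{x}=(\boldsymbol{u},\boldsymbol{\alpha}_{t_1}(a_1b_1),\boldsymbol{\alpha}_{t_2}(a_2b_2),\boldsymbol{v})$, $\boldsymbol{y}=(\boldsymbol{u},\boldsymbol{\alpha}_{t_1}(b_1a_1),\boldsymbol{\alpha}_{t_2}(b_2a_2),\boldsymbol{v})$. (2) $d_H(\mathcal{R}(\boldsymbol{x}),\mathcal{R}(\boldsymbol{y}))=4$ if and only if one of the following holds: (A) there exist $\boldsymbol{u},\boldsymbol{w}\in\Sigma_q^{\ge0}$, $\boldsymbol{v}\in\Sigma_q^{\ge1}$, integers $t_1,t_2\ge1$ and symbols $a_1,b_1,a_2,b_2\in\Sigma_q$ with $a_1\ne b_1$, $a_2\ne b_2$, such that $\boldsymbol{x}=(\boldsymbol{u},\boldsymbol{\alpha}_{t_1}(a_1b_1),\boldsymbol{v},\boldsymbol{\alpha}_{t_2}(a_2b_2),\boldsymbol{w})$ and $\boldsymbol{y}=(\boldsymbol{u},\boldsymbol{\alpha}_{t_1}(b_1a_1),\boldsymbol{v},\boldsymbol{\alpha}_{t_2}(b_2a_2),\boldsymbol{w})$;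 (B) there exist $\boldsymbol{u},\boldsymbol{v}\in\Sigma_q^{\ge0}$, integers $t_1,t_2,t_3\ge1$ and symbols $a_1,b_1,a_2,b_2,a_3,b_3\in\Sigma_q$ with $a_i\ne b_i$ ($i=1,2,3$), such that $\{\{\alpha_{t_1}(a_1b_1)[t_1],a_2\}\}\neq\{\{\alpha_{t_1}(b_1a_1)[t_1],b_2\}\}$, $\{\{\alpha_{t_2}(a_2b_2)[t_2],a_3\}\}\neq\{\{\alpha_{t_2}(b_2a_2)[t_2],b_3\}\}$, and $\boldsymbol{x}=(\boldsymbol{u},\boldsymbol{\alpha}_{t_1}(a_1b_1),\boldsymbol{\alpha}_{t_2}(a_2b_2),\boldsymbol{\alpha}_{t_3}(a_3b_3),\boldsymbol{v})$, $\boldsymbol{y}=(\boldsymbol{u},\boldsymbol{\alpha}_{t_1}(b_1a_1),\boldsymbol{\alpha}_{t_2}(b_2a_2),\boldsymbol{\alpha}_{t_3}(b_3a_3),\boldsymbol{v})$.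
   Context: $\Sigma_q=\{0,\dots,q-1\}$; $\Sigma_q^{\ge0}$ (resp. $\Sigma_q^{\ge1}$) is the set of all finite (resp. nonempty finite) sequences over $\Sigma_q$; $(\cdot,\cdot)$ is concatenation. For $\boldsymbol{x}\in\Sigma_q^n$, $x[i]$ is its $i$-th entry, with $x[i]=0$ for $i\notin[1,n]$. $\mathcal{R}(\boldsymbol{x})$ is the vector of length $n+1$ whose $i$-th entry is the multiset $\{\{x[i-1],x[i]\}\}$. $d_H$ is Hamming distance. For distinct $a,b$ and $t\ge0$, $\boldsymbol{\alpha}_t(ab)$ is the alternating sequence $abab\cdots$ of length $t$ and $\alpha_t(ab)[t]$ its last entry; $\{\{\cdot\}\}$ denotes a multiset. *)

From mathcomp Require Import all_boot.
Set Implicit Arguments. Unset Strict Implicit. Unset Printing Implicit Defensive.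

Definition word (q : nat) (s : seq nat) : bool := all (fun a => a < q) s.

(* x[i] for 1-based index i, with x[i] = 0 outside [1, size x]. *)
Definition entry (x : seq nat) (i : nat) : nat :=
  if (1 <= i <= size x) then nth 0 x i.-1 else 0.

(* The multiset {{a, b}} of two symbols, as the sorted pair. *)
Definition mset2 (a b : nat) : nat * nat := (minn a b, maxn a b).

Definition Rvec (x : seq nat) : seq (nat * nat) :=
  [seq mset2 (entry x i.-1) (entry x i) | i <- iota 1 (size x).+1].

Definition dH {T : eqType} (s t : seq T) : nat :=
  count (fun p : T * T => p.1 != p.2) (zip s t).

Definition alpha (t a b : nat) : seq nat :=
  mkseq (fun i => if odd i then b else a) t.

Definition alpha_last (t a b : nat) : nat := entry (alpha t a b) t.

(* Inside an alternating
   block alpha_t(ab) against alpha_t(ba) consecutive pairs are swaps, which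
   give equal multisets, so a maximal block costs 1 on entry and nothing
   inside; after it the remaining distance is that of the suffixes x', y',
   plus 1 when x', y' start with the same symbol (the entry closing the block).
   Hence d(x, y) = 1 + d(x', y') + [x'_1 = y'_1] for the first maximal block,
   so d is never 1, d = 2 means a single block, d = 3 two adjacent blocks, and
   d = 4 either two separated blocks or three adjacent ones. *)

From mathcomp Require Import all_boot zify.

Set Implicit Arguments.
Unset Strict Implicit.

Lemma mset2C a b : mset2 a b = mset2 b a.
Proof. by rewrite /mset2 minnC maxnC. Qed.

Lemma mset2_eqE a b c d :
  (mset2 a b == mset2 c d) = (a == c) && (b == d) || (a == d) && (b == c).
Proof. rewrite /mset2 xpair_eqE; lia. Qed.

Lemma eq_mset2l c a b : (mset2 c a == mset2 c b) = (a == b).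
Proof. rewrite mset2_eqE; lia. Qed.

Lemma eq_mset2r c a b : (mset2 a c == mset2 b c) = (a == b).
Proof. by rewrite !(mset2C _ c) eq_mset2l. Qed.

Lemma Rvec_pairmap x : Rvec x = pairmap mset2 0 (rcons x 0).
Proof.
have entryE i : entry x i = nth 0 (0 :: x) i.
  by rewrite /entry; case: i => //= i; case: ltnP => // ?; rewrite nth_default.
apply: (@eq_from_nth _ (0, 0)) => [|i]; rewrite size_map size_iota ?size_pairmap ?size_rcons //.
move=> lt_i; rewrite (nth_map 0) ?size_iota // nth_iota // (nth_pairmap 0) ?size_rcons //.
by rewrite !entryE -[0 :: rcons x 0]/(rcons (0 :: x) 0) !nth_rcons_default.
Qed.

(* [rdist p q x y] is the distance between the composite vectors of [x] and
   [y] when the entries before them are taken to be [p] and [q] instead of 0. *)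
Definition rdist (p q : nat) (x y : seq nat) : nat :=
  dH (pairmap mset2 p (rcons x 0)) (pairmap mset2 q (rcons y 0)).

Local Notation dR x y := (dH (Rvec x) (Rvec y)).

Lemma rdist_cons p q a b x y :
  rdist p q (a :: x) (b :: y) = (mset2 p a != mset2 q b) + rdist a b x y.
Proof. by []. Qed.

Lemma rdist_nil p q : rdist p q [::] [::] = (p != q).
Proof. by rewrite /rdist /dH /= eq_mset2r addn0. Qed.

Lemma dR_rdist x y : dR x y = rdist 0 0 x y.
Proof. by rewrite !Rvec_pairmap. Qed.

Lemma dR_cons a b x y : dR (a :: x) (b :: y) = (a != b) + rdist a b x y.
Proof. by rewrite dR_rdist rdist_cons eq_mset2l. Qed.

Lemma rdist_same p x y : rdist p p x y = dR x y.
Proof.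
by rewrite dR_rdist; case: x => [|a x]; case: y => [|b y];
  rewrite /rdist /dH //= ?eq_mset2l ?eq_mset2r.
Qed.

Lemma dR_catl u x y : dR (u ++ x) (u ++ y) = dR x y.
Proof. by elim: u => //= a u IH; rewrite dR_cons eqxx rdist_same. Qed.

Lemma dR_refl x : dR x x = 0.
Proof. by rewrite -[x]cats0 dR_catl. Qed.

Lemma alphaS t a b : alpha t.+1 a b = a :: alpha t b a.
Proof.
apply: (@eq_from_nth _ 0) => [|[|i]]; rewrite /alpha /mkseq /= ?size_map ?size_iota // => lt_i.
by rewrite !(nth_map 0) ?size_iota // !nth_iota //=; case: odd.
Qed.

Lemma alpha_lastE t a b : alpha_last t.+1 a b = if odd t then b else a.
Proof. by rewrite /alpha_last /entry /alpha size_mkseq leqnn nth_mkseq. Qed.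

Lemma alpha_lastSS t a b : alpha_last t.+2 a b = alpha_last t.+1 b a.
Proof. by rewrite !alpha_lastE /=; case: odd. Qed.

Lemma alpha_last_neq t a b : 0 < t -> a != b -> alpha_last t a b != alpha_last t b a.
Proof. by case: t => // t _; rewrite !alpha_lastE; case: odd; rewrite // eq_sym. Qed.

Lemma head_alpha_cat t (t_gt0 : 0 < t) c a b s : head c (alpha t a b ++ s) = a.
Proof. by case: t t_gt0 => // t _; rewrite alphaS. Qed.

Lemma rdist_alpha p q t a b x y : 0 < t -> a != b ->
  rdist p q (alpha t a b ++ x) (alpha t b a ++ y) =
  (mset2 p a != mset2 q b) + rdist (alpha_last t a b) (alpha_last t b a) x y.
Proof.
case: t => // t _; elim: t p q a b => [|t IH] p q a b neq_ab.
  by rewrite alphaS /= rdist_cons alpha_lastE.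
rewrite alphaS [alpha t.+2 b a]alphaS !cat_cons rdist_cons IH; last by rewrite eq_sym.
by rewrite (mset2C a b) eqxx !alpha_lastSS.
Qed.

(* An alternating block ending in [l], [l'] is not continued by [x], [y];
   [head 0] mirrors the zero padding of [Rvec] when the suffixes are empty. *)
Definition breaks (l l' : nat) (x y : seq nat) : bool :=
  mset2 l (head 0 x) != mset2 l' (head 0 y).

Lemma rdist_after_block l l' x y : l != l' -> breaks l l' x y -> size x = size y ->
  rdist l l' x y = dR x y + (head 0 x == head 0 y).
Proof.
case: x y => [|c x] [|d y] // neq_l brk _; first by rewrite rdist_nil neq_l.
by move: brk; rewrite rdist_cons dR_cons /breaks /= => ->; case: eqP => _ /=; lia.
Qed.

Lemma dR_block u t a b x y : 0 < t -> a != b -> size x = size y ->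
  breaks (alpha_last t a b) (alpha_last t b a) x y ->
  dR (u ++ alpha t a b ++ x) (u ++ alpha t b a ++ y) =
  (dR x y + (head 0 x == head 0 y)).+1.
Proof.
move=> t_gt0 neq_ab sz brk.
by rewrite dR_catl dR_rdist rdist_alpha // eq_mset2l neq_ab rdist_after_block ?alpha_last_neq.
Qed.

Lemma alt_block_max a b x y : a != b -> size x = size y ->
  exists t x' y', [/\ 0 < t, a :: x = alpha t a b ++ x', b :: y = alpha t b a ++ y',
    size x' = size y' & breaks (alpha_last t a b) (alpha_last t b a) x' y'].
Proof.
elim: x a b y => [|c x IH] a b [|d y] // neq_ab.
  by exists 1, [::], [::]; rewrite /breaks alpha_lastE eq_mset2r.
case=> sz; have [/andP[/eqP-> /eqP->]|no_swap] := boolP ((c == b) && (d == a)).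
  have neq_ba : b != a by rewrite eq_sym.
  have [[|t] [x' [y' [// _ -> -> sz' brk]]]] := IH b a y neq_ba sz.
  by exists t.+2, x', y'; rewrite !alpha_lastSS [alpha t.+2 a b]alphaS [alpha t.+2 b a]alphaS.
exists 1, (c :: x), (d :: y); split; rewrite /= ?sz //.
by rewrite /breaks !alpha_lastE /= mset2_eqE (negbTE neq_ab) /= andbC [a == d]eq_sym.
Qed.

Lemma dR_first_block x y : size x = size y -> x != y ->
  exists u t a b x' y',
    [/\ 0 < t, a != b, x = u ++ alpha t a b ++ x' & y = u ++ alpha t b a ++ y'] /\
    [/\ size x' = size y', breaks (alpha_last t a b) (alpha_last t b a) x' y'
      & dR x y = (dR x' y' + (head 0 x' == head 0 y')).+1].
Proof.
elim: x y => [|c x IH] [|d y] // [sz] neq_xy.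
move: neq_xy; have [<-|neq_cd _] := eqVneq c d.
  rewrite eqseq_cons eqxx /= => neq_xy.
  have [u [t [a [b [x' [y' [[t_gt0 neq_ab -> ->] [sz' brk dxy]]]]]]]] := IH y sz neq_xy.
  exists (c :: u), t, a, b, x', y'; split; split => //.
  by rewrite dR_cons eqxx rdist_same -dxy.
have [t [x' [y' [t_gt0 ex ey sz' brk]]]] := alt_block_max neq_cd sz.
exists [::], t, c, d, x', y'; split; split => //.
by rewrite ex ey (dR_block [::]).
Qed.

Lemma dR_eq0 x y : size x = size y -> dR x y = 0 <-> x = y.
Proof.
move=> sz; split => [|->]; last exact: dR_refl.
by have [//|/(dR_first_block sz) [u [t [a [b [x' [y' [_ [_ _ ->]]]]]]]]] := eqVneq x y.
Qed.

Lemma dR_neq1 x y : size x = size y -> dR x y != 1.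
Proof.
move=> sz; have [->|] := eqVneq x y; first by rewrite dR_refl.
case/(dR_first_block sz) => u [t [a [b [x' [y' [_ [sz' _ ->]]]]]]].
rewrite eqSS addn_eq0 negb_and -implybE; apply/implyP => /eqP/(dR_eq0 sz') ->.
by rewrite eqxx.
Qed.

Lemma head_cat_alpha_eq u t a b s s' : 0 < t -> a != b ->
  (head 0 (u ++ alpha t a b ++ s) == head 0 (u ++ alpha t b a ++ s')) = (u != [::]).
Proof.
by case: u => [|c u] t_gt0 neq_ab; rewrite /= ?eqxx // !head_alpha_cat // (negbTE neq_ab).
Qed.

Lemma size_alpha t a b : size (alpha t a b) = t.
Proof. exact: size_mkseq. Qed.

Lemma dR_eq2 x y : size x = size y -> dR x y = 2 <->
  exists u v t a b, [/\ 0 < t, a != b, x = u ++ alpha t a b ++ v & y = u ++ alpha t b a ++ v].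
Proof.
move=> sz; split => [|[u [v [t [a [b [t_gt0 neq_ab -> ->]]]]]]]; last first.
  by rewrite dR_block ?dR_refl ?eqxx // /breaks eq_mset2r alpha_last_neq.
have [->|] := eqVneq x y; first by rewrite dR_refl.
case/(dR_first_block sz) => u [t [a [b [x' [y' [[t_gt0 neq_ab -> ->] [sz' _ ->]]]]]]].
case=> sum; have /(dR_eq0 sz') eq_xy' : dR x' y' = 0.
  by move: sum (dR_neq1 sz'); case: (_ == _) => /=; lia.
by exists u, x', t, a, b; rewrite eq_xy'.
Qed.

Lemma dR_eq3 x y : size x = size y -> dR x y = 3 <->
  exists u v t1 t2 a1 b1 a2 b2,
    [/\ 0 < t1, 0 < t2, a1 != b1 & a2 != b2] /\
    [/\ mset2 (alpha_last t1 a1 b1) a2 != mset2 (alpha_last t1 b1 a1) b2,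
        x = u ++ alpha t1 a1 b1 ++ alpha t2 a2 b2 ++ v &
        y = u ++ alpha t1 b1 a1 ++ alpha t2 b2 a2 ++ v].
Proof.
move=> sz; split; last first.
  move=> [u [v [t1 [t2 [a1 [b1 [a2 [b2 [[t1_gt0 t2_gt0 neq1 neq2] [brk -> ->]]]]]]]]]].
  have sz2 : size (alpha t2 a2 b2 ++ v) = size (alpha t2 b2 a2 ++ v).
    by rewrite !size_cat !size_alpha.
  have brk2 : breaks (alpha_last t1 a1 b1) (alpha_last t1 b1 a1)
      (alpha t2 a2 b2 ++ v) (alpha t2 b2 a2 ++ v).
    by rewrite /breaks !(head_alpha_cat t2_gt0).
  rewrite dR_block // !(head_alpha_cat t2_gt0) (negbTE neq2) addn0; congr _.+1.
  by apply/(dR_eq2 sz2); exists [::], v, t2, a2, b2.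
have [->|] := eqVneq x y; first by rewrite dR_refl.
case/(dR_first_block sz) => u [t1 [a1 [b1 [x' [y' [[t1_gt0 neq1 -> ->] [sz' brk ->]]]]]]] [sum].
have [heads|heads] := boolP (head 0 x' == head 0 y'); rewrite ?heads /= in sum.
  by have := dR_neq1 sz'; lia.
have /(dR_eq2 sz') [u' [v [t2 [a2 [b2 [t2_gt0 neq2 ex ey]]]]]] : dR x' y' = 2 by lia.
move: heads brk; rewrite ex ey head_cat_alpha_eq // negbK => /eqP ->.
rewrite /breaks !(head_alpha_cat t2_gt0) => brk.
by exists u, v, t1, t2, a1, b1, a2, b2.
Qed.

Lemma dR_eq4 x y : size x = size y -> dR x y = 4 <->
  (exists u v w t1 t2 a1 b1 a2 b2,
    [/\ 0 < t1, 0 < t2, a1 != b1, a2 != b2 & 0 < size v] /\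
    x = u ++ alpha t1 a1 b1 ++ v ++ alpha t2 a2 b2 ++ w /\
    y = u ++ alpha t1 b1 a1 ++ v ++ alpha t2 b2 a2 ++ w) \/
  (exists u v t1 t2 t3 a1 b1 a2 b2 a3 b3,
    [/\ 0 < t1, 0 < t2, 0 < t3, a1 != b1 & a2 != b2] /\ a3 != b3 /\
    [/\ mset2 (alpha_last t1 a1 b1) a2 != mset2 (alpha_last t1 b1 a1) b2,
        mset2 (alpha_last t2 a2 b2) a3 != mset2 (alpha_last t2 b2 a2) b3,
        x = u ++ alpha t1 a1 b1 ++ alpha t2 a2 b2 ++ alpha t3 a3 b3 ++ v &
        y = u ++ alpha t1 b1 a1 ++ alpha t2 b2 a2 ++ alpha t3 b3 a3 ++ v]).
Proof.
move=> sz; split; last first.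
  case=> [[u [v [w [t1 [t2 [a1 [b1 [a2 [b2 [[t1_gt0 t2_gt0 neq1 neq2]]]]]]]]]]]|].
    case: v => // c v _ [-> ->].
    have sz2 : size (c :: v ++ alpha t2 a2 b2 ++ w) = size (c :: v ++ alpha t2 b2 a2 ++ w).
      by rewrite /= !size_cat !size_alpha.
    have brk : breaks (alpha_last t1 a1 b1) (alpha_last t1 b1 a1)
        (c :: v ++ alpha t2 a2 b2 ++ w) (c :: v ++ alpha t2 b2 a2 ++ w).
      by rewrite /breaks eq_mset2r alpha_last_neq.
    rewrite dR_block //= eqxx addn1; congr _.+2.
    by apply/(dR_eq2 sz2); exists (c :: v), w, t2, a2, b2.
  move=> [u [v [t1 [t2 [t3 [a1 [b1 [a2 [b2 [a3 [b3 H]]]]]]]]]]].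
  move: H => [[t1_gt0 t2_gt0 t3_gt0 neq1 neq2] [neq3 [brk1 brk2 -> ->]]].
  have sz3 : size (alpha t2 a2 b2 ++ alpha t3 a3 b3 ++ v) =
             size (alpha t2 b2 a2 ++ alpha t3 b3 a3 ++ v).
    by rewrite !size_cat !size_alpha.
  have brk : breaks (alpha_last t1 a1 b1) (alpha_last t1 b1 a1)
      (alpha t2 a2 b2 ++ alpha t3 a3 b3 ++ v) (alpha t2 b2 a2 ++ alpha t3 b3 a3 ++ v).
    by rewrite /breaks !(head_alpha_cat t2_gt0).
  rewrite dR_block // !(head_alpha_cat t2_gt0) (negbTE neq2) addn0; congr _.+1.
  by apply/(dR_eq3 sz3); exists [::], v, t2, t3, a2, b2, a3, b3.
have [->|] := eqVneq x y; first by rewrite dR_refl.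
case/(dR_first_block sz) => u [t1 [a1 [b1 [x' [y' [[t1_gt0 neq1 -> ->] [sz' brk ->]]]]]]] [sum].
have [heads|heads] := boolP (head 0 x' == head 0 y'); rewrite ?heads /= in sum.
  have /(dR_eq2 sz') [v [w [t2 [a2 [b2 [t2_gt0 neq2 ex ey]]]]]] : dR x' y' = 2 by lia.
  move: heads; rewrite ex ey head_cat_alpha_eq // -size_eq0 -lt0n => v_gt0.
  by left; exists u, v, w, t1, t2, a1, b1, a2, b2.
have /(dR_eq3 sz') [u' [v [t2 [t3 [a2 [b2 [a3 [b3 H]]]]]]]] : dR x' y' = 3 by lia.
move: H => [[t2_gt0 t3_gt0 neq2 neq3] [brk2 ex ey]].
move: heads brk; rewrite ex ey head_cat_alpha_eq // negbK => /eqP ->.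
rewrite /breaks !(head_alpha_cat t2_gt0) => brk.
by right; exists u, v, t1, t2, t3, a1, b1, a2, b2, a3, b3.
Qed.

Lemma word_alpha_head q t a b : 0 < t -> word q (alpha t a b) -> a < q.
Proof. by case: t => // t _; rewrite alphaS /word /= => /andP[]. Qed.

Unset Implicit Arguments.

Theorem theorem3 (q n : nat) (x y : seq nat) :
  2 <= q -> 1 <= n ->
  size x = n -> size y = n -> word q x -> word q y -> x <> y ->
  (dH (Rvec x) (Rvec y) = 3 <->
    exists (u v : seq nat) (t1 t2 a1 b1 a2 b2 : nat),
      [/\ word q u, word q v, 1 <= t1 & 1 <= t2] /\
      [/\ a1 < q, b1 < q, a2 < q & b2 < q] /\ a1 != b1 /\ a2 != b2 /\
      mset2 (alpha_last t1 a1 b1) a2 != mset2 (alpha_last t1 b1 a1) b2 /\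
      x = u ++ alpha t1 a1 b1 ++ alpha t2 a2 b2 ++ v /\
      y = u ++ alpha t1 b1 a1 ++ alpha t2 b2 a2 ++ v)
  /\
  (dH (Rvec x) (Rvec y) = 4 <->
    (exists (u v w : seq nat) (t1 t2 a1 b1 a2 b2 : nat),
      [/\ word q u, word q v, word q w & 1 <= size v] /\ 1 <= t1 /\ 1 <= t2 /\
      [/\ a1 < q, b1 < q, a2 < q & b2 < q] /\ a1 != b1 /\ a2 != b2 /\
      x = u ++ alpha t1 a1 b1 ++ v ++ alpha t2 a2 b2 ++ w /\
      y = u ++ alpha t1 b1 a1 ++ v ++ alpha t2 b2 a2 ++ w)
    \/
    (exists (u v : seq nat) (t1 t2 t3 a1 b1 a2 b2 a3 b3 : nat),
      [/\ word q u, word q v, 1 <= t1, 1 <= t2 & 1 <= t3] /\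
      [/\ a1 < q, b1 < q, a2 < q & b2 < q] /\ a3 < q /\ b3 < q /\
      [/\ a1 != b1, a2 != b2 & a3 != b3] /\
      mset2 (alpha_last t1 a1 b1) a2 != mset2 (alpha_last t1 b1 a1) b2 /\
      mset2 (alpha_last t2 a2 b2) a3 != mset2 (alpha_last t2 b2 a2) b3 /\
      x = u ++ alpha t1 a1 b1 ++ alpha t2 a2 b2 ++ alpha t3 a3 b3 ++ v /\
      y = u ++ alpha t1 b1 a1 ++ alpha t2 b2 a2 ++ alpha t3 b3 a3 ++ v)).
Proof.
move=> _ _ sx sy wx wy _; have sz : size x = size y by rewrite sx sy.
split; split.
- case/(dR_eq3 sz) => u [v [t1 [t2 [a1 [b1 [a2 [b2 [[t1_gt0 t2_gt0 neq1 neq2] [brk ex ey]]]]]]]]].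
  move: wx wy; rewrite ex ey /word !all_cat.
  move=> /and4P[wu /(word_alpha_head t1_gt0) a1q /(word_alpha_head t2_gt0) a2q wv].
  move=> /and4P[_ /(word_alpha_head t1_gt0) b1q /(word_alpha_head t2_gt0) b2q _].
  by exists u, v, t1, t2, a1, b1, a2, b2; do !split.
- move=> [u [v [t1 [t2 [a1 [b1 [a2 [b2 [[_ _ t1_gt0 t2_gt0] [_ [neq1 [neq2 [brk [ex ey]]]]]]]]]]]]]].
  by apply/(dR_eq3 sz); exists u, v, t1, t2, a1, b1, a2, b2.
- case/(dR_eq4 sz) => [[u [v [w [t1 [t2 [a1 [b1 [a2 [b2 H]]]]]]]]]|].
    move: H => [[t1_gt0 t2_gt0 neq1 neq2 v_gt0] [ex ey]].
    move: wx wy; rewrite ex ey /word !all_cat.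
    move=> /and5P[wu /(word_alpha_head t1_gt0) a1q wv /(word_alpha_head t2_gt0) a2q ww].
    move=> /and5P[_ /(word_alpha_head t1_gt0) b1q _ /(word_alpha_head t2_gt0) b2q _].
    by left; exists u, v, w, t1, t2, a1, b1, a2, b2; do !split.
  move=> [u [v [t1 [t2 [t3 [a1 [b1 [a2 [b2 [a3 [b3 H]]]]]]]]]]].
  move: H => [[t1_gt0 t2_gt0 t3_gt0 neq1 neq2] [neq3 [brk1 brk2 ex ey]]].
  move: wx wy; rewrite ex ey /word !all_cat.
  move=> /and5P[wu /(word_alpha_head t1_gt0) a1q /(word_alpha_head t2_gt0) a2q].
  move=> /(word_alpha_head t3_gt0) a3q wv.
  move=> /and5P[_ /(word_alpha_head t1_gt0) b1q /(word_alpha_head t2_gt0) b2q].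
  move=> /(word_alpha_head t3_gt0) b3q _.
  by right; exists u, v, t1, t2, t3, a1, b1, a2, b2, a3, b3; do !split.
- case=> [[u [v [w [t1 [t2 [a1 [b1 [a2 [b2 H]]]]]]]]]|[u [v [t1 [t2 [t3 [a1 [b1 [a2 [b2 [a3 [b3 H]]]]]]]]]]]];
    apply/(dR_eq4 sz).
    move: H => [[_ _ _ v_gt0] [t1_gt0 [t2_gt0 [_ [neq1 [neq2 [ex ey]]]]]]].
    by left; exists u, v, w, t1, t2, a1, b1, a2, b2.
  move: H => [[_ _ t1_gt0 t2_gt0 t3_gt0] [_ [_ [_ [[neq1 neq2 neq3] [brk1 [brk2 [ex ey]]]]]]]].
  by right; exists u, v, t1, t2, t3, a1, b1, a2, b2, a3, b3.
Qed.
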